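(* For each $\gamma\in\Gamma$, $$\sum_{n\ge1}\sum_{\theta\in\Gamma}m^n(\gamma,\theta)\le\sum_{n\ge1}|\gamma|\,\beta(V,\alpha)^n,$$ where $m^n$ is the $n$-th power of the matrix $m(\gamma,\theta)=w(\theta)\mathbf 1\{\gamma\not\sim\theta\}$. In particular, if $\beta(V,\alpha)<1$, then the expected total number of descendants of a finite cycle $\gamma$ in the multitype branching process with mean matrix $m$ is finite.
   Context: Fix $\alpha>0$ and a strictly convex potential $V:\mathbb{Z}^d\to\mathbb{R}^+\cup\{+\infty\}$ with $V(\vec0)=0$. $\Gamma$ is the set of finite cycles of $\mathbb{Z}^d$: a cycle of length $|\gamma|=n\ge2$ on distinct sites $x_1,\dots,x_n$ maps $x_i\mapsto x_{i+1}$ (mod $n$) and fixes other sites, with support $\{\gamma\}=\{x_1,\dots,x_n\}$. $\gamma\not\sim\theta$ means $\{\gamma\}\cap\{\theta\}\neq\emptyset$. $w(\gamma)=\exp\{-\alpha\sum_{x\in\{\gamma\}}V(\gamma(x)-x)\}$ and $\beta(V,\alpha)=\sum_{\theta\in\Gamma,\ \vec0\in\{\theta\}}|\theta|\,w(\theta)$. The $m^n(\gamma,\theta)=\sum_{\gamma_1,\dots,\gamma_{n-1}}m(\gamma,\gamma_1)m(\gamma_1,\gamma_2)\cdots m(\gamma_{n-1},\theta)$ is the mean number of type-$\theta$ individuals in generation $n$ of the multitype branching process started from one individual of type $\gamma$. *)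

From HB Require Import structures.
From mathcomp Require Import all_boot all_order all_algebra.
From mathcomp Require Import all_classical all_reals all_analysis.
Set Implicit Arguments. Unset Strict Implicit. Unset Printing Implicit Defensive.
Import Order.TTheory GRing.Theory Num.Theory.
Local Open Scope classical_set_scope.
Local Open Scope ring_scope.

Section Cycles.
Variable d : nat.

Definition site := 'rV[int]_d.

Definition is_cycle (g : site -> site) : Prop :=
  exists s : seq site, [/\ (2 <= size s)%N, uniq s,
    (forall i, (i < size s)%N ->
        g (nth 0 s i) = nth 0 s ((i.+1) %% size s)) &
    (forall x, x \notin s -> g x = x)].

Definition Gamma : set (site -> site) := [set g | is_cycle g].

Definition supp (g : site -> site) : set site := [set x | g x <> x].

Definition incompat (g th : site -> site) : Prop := supp g `&` supp th !=set0.
End Cycles.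

Section Weights.
Context {R : realType} {d : nat}.
Local Open Scope ereal_scope.

Definition clen (g : site d -> site d) : \bar R := \esum_(x in supp g) 1.

(* w(g) = exp(- alpha * sum_{x in {g}} V(g x - x)); equals 0 if the sum is +oo. *)
Definition wt (V : site d -> \bar R) (alpha : R) (g : site d -> site d) : \bar R :=
  expeR (- (alpha%:E * \esum_(x in supp g) V (g x - x)%R)).

Definition mm (V : site d -> \bar R) (alpha : R) (g th : site d -> site d) : \bar R :=
  wt V alpha th * (\1_[set th' | incompat g th'] th)%:E.

(* mpowS V alpha n = m^(n+1):
   m^1 = m,  m^(n+2)(g,th) = sum_{eta in Gamma} m^(n+1)(g,eta) m(eta,th). *)
Fixpoint mpowS (V : site d -> \bar R) (alpha : R) (n : nat)
  (g th : site d -> site d) : \bar R :=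
  match n with
  | 0%N => mm V alpha g th
  | n'.+1 => \esum_(eta in @Gamma d) (mpowS V alpha n' g eta * mm V alpha eta th)
  end.

(* m^n for n >= 1 *)
Definition mpow V alpha (n : nat) g th := mpowS V alpha n.-1 g th.

Definition beta (V : site d -> \bar R) (alpha : R) : \bar R :=
  \esum_(th in [set th | @Gamma d th /\ supp th 0%R]) (clen th * wt V alpha th).

(* Strict convexity of V : Z^d -> [0, +oo]: V is the restriction to Z^d of a
   strictly convex function U : R^d -> [0, +oo] (the strict inequality being
   required where the right-hand side is finite). *)
Definition strictly_convex_ext (U : 'rV[R]_d -> \bar R) : Prop :=
  forall (x y : 'rV[R]_d) (t : R), x != y -> (0 < t < 1)%R ->
    U x < +oo -> U y < +oo ->
    U (t *: x + (1 - t) *: y)%R < t%:E * U x + (1 - t)%:E * U y.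

Definition strictly_convex_pot (V : site d -> \bar R) : Prop :=
  exists U : 'rV[R]_d -> \bar R,
    (forall z, 0 <= U z) /\ strictly_convex_ext U /\
    (forall x : site d, V x = U (map_mx (fun k : int => k%:~R) x)).
End Weights.

From HB Require Import structures.
From mathcomp Require Import all_boot all_order all_algebra.
From mathcomp Require Import all_classical all_reals all_analysis.
Import Order.TTheory GRing.Theory Num.Theory.
Local Open Scope classical_set_scope.
Local Open Scope ring_scope.

(* Weight each type θ by its length |θ| >= 1.  If η and θ are incompatible
   their supports meet, so 1{η ≁ θ} <= Σ_{x ∈ {η}} 1{x ∈ {θ}}; since |.| and w
   are translation invariant, the cycles through any fixed site x contribute
   exactly β.  Hence Σ_θ m(η,θ) |θ| <= |η| β, and pushing this through the
   matrix powers gives Σ_θ m^n(γ,θ) |θ| <= |γ| β^n.  Dropping |θ| >= 1 yields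
   the bound, which for β < 1 is a convergent geometric series. *)

Section esum_complements.
Context {R : realType}.
Local Open Scope ereal_scope.

Lemma term_le_esum {T : choiceType} {I : set T} (a : T -> \bar R) {i : T} :
  I i -> a i <= \esum_(j in I) a j.
Proof.
move=> Ii; apply: esum_ge; exists [set i]; last by rewrite fsbig_set1.
by split; [exact: finite_set1 | move=> _ ->].
Qed.

Lemma ge0_mule_esumr {T : choiceType} (I : set T) (f : T -> \bar R) (c : \bar R) :
  (forall i, 0 <= f i) -> 0 <= c ->
  (c * \esum_(i in I) f i) = \esum_(i in I) c * f i.
Proof.
move=> f0; case: c => [r r0| _ |//].
  have fsets_nonempty : [set \sum_(i \in X) f i | X in fsets I] != set0.
    by apply/set0P; exists (\sum_(i \in set0) f i), set0 => //; exact: fsets_set0.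
  rewrite /esum -ereal_supZl // image_comp; congr ereal_sup.
  by apply: eq_imagel => X _ /=; exact: ge0_mule_fsumr.
have [[i Ii fi_gt0]|f_le0] := pselect (exists2 i, I i & 0 < f i).
  have esum_gt0 : 0 < \esum_(j in I) f j.
    exact: (lt_le_trans fi_gt0 (term_le_esum f Ii)).
  rewrite gt0_mulye //; apply/eqP; rewrite eq_le leey /=.
  by rewrite -[leLHS](gt0_mulye fi_gt0) (term_le_esum (fun j => +oo * f j)).
have f_eq0 j : I j -> f j = 0.
  by move=> Ij; apply/eqP; rewrite eq_le f0 andbT leNgt; apply/negP => ?; apply: f_le0; exists j.
by rewrite !esum1 ?mule0 // => j /f_eq0 ->; rewrite mule0.
Qed.

Lemma ge0_mule_esuml {T : choiceType} (I : set T) (f : T -> \bar R) (c : \bar R) :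
  (forall i, 0 <= f i) -> 0 <= c ->
  ((\esum_(i in I) f i) * c) = \esum_(i in I) f i * c.
Proof.
move=> f0 c0; rewrite muleC ge0_mule_esumr //.
by apply: eq_esum => i _; rewrite muleC.
Qed.

Lemma exchange_esum {T1 T2 : choiceType} (I : set T1) (J : set T2)
    (a : T1 -> T2 -> \bar R) : (forall i j, 0 <= a i j) ->
  \esum_(i in I) \esum_(j in J) a i j = \esum_(j in J) \esum_(i in I) a i j.
Proof.
move=> a0; rewrite (esum_esum (J := fun=> J)) // (esum_esum (J := fun=> I)) //.
rewrite (reindex_esum (J `*` I) _ (fun x => (x.2, x.1))) //; split=> //=.
- by move=> [i j] [].
- by move=> [i1 i2] [j1 j2] /= _ _ [-> ->].
- by move=> [i1 i2] [Ii1 Ji2]; exists (i2, i1).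
Qed.

End esum_complements.

Section cycles.
Context {d : nat}.
Implicit Types (g : site d -> site d) (c x : site d).

Lemma supp_cycle {g} {s : seq (site d)} : (2 <= size s)%N -> uniq s ->
  (forall i, (i < size s)%N -> g (nth 0 s i) = nth 0 s (i.+1 %% size s)) ->
  (forall x, x \notin s -> g x = x) ->
  supp g = [set x | x \in s].
Proof.
move=> s_ge2 s_uniq g_next g_id; apply/seteqP; split => x /=.
  by apply: contra_notT => /g_id.
move=> xs; set i := index x s; have i_lt : (i < size s)%N by rewrite index_mem.
rewrite /supp /= -(nth_index 0 xs) g_next // => /eqP.
rewrite nth_uniq // ?ltn_pmod ?(ltnW s_ge2) //.
case: (ltngtP i.+1 (size s)) => [/modn_small->|i_ge|si].
- by rewrite gtn_eqF.
- by move: i_ge; rewrite ltnNge i_lt.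
- by rewrite -si modnn => /eqP i0; move: s_ge2; rewrite -si /i -i0.
Qed.

Definition translate c g : site d -> site d := fun y => g (y + c) - c.

Lemma translateK c : cancel (translate c) (translate (- c)).
Proof. by move=> g; apply: funext => y; rewrite /translate opprK !subrK. Qed.

Lemma supp_translate c g y : supp (translate c g) y <-> supp g (y + c).
Proof.
rewrite /supp /translate /=; split => g_moves g_fixes; apply: g_moves.
  by rewrite g_fixes addrK.
by move/(congr1 (+%R^~ c)): g_fixes; rewrite /= subrK.
Qed.

Lemma Gamma_translate c g : Gamma g -> Gamma (translate c g).
Proof.
move=> [s [s_ge2 s_uniq g_next g_id]]; exists [seq z - c | z <- s].
have subc_inj : injective (fun z : site d => z - c) by move=> ? ? /addIr.
rewrite size_map; split => //.
- by rewrite map_inj_uniq.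
- move=> i i_lt; rewrite !(nth_map 0) ?ltn_pmod ?(ltnW s_ge2) //.
  by rewrite /translate subrK g_next.
- move=> x xNs; rewrite /translate g_id ?addrK //.
  by apply: contra xNs => xs; apply/mapP; exists (x + c); rewrite ?addrK.
Qed.

Lemma translate_supp_bij c g :
  set_bij (supp g) (supp (translate c g)) (fun x => x - c).
Proof.
split.
- by move=> x gx; apply/supp_translate; rewrite subrK.
- by move=> x y _ _ /addIr.
- by move=> y /supp_translate gy; exists (y + c); rewrite ?addrK.
Qed.

Lemma translate_through_bij c :
  set_bij [set th | Gamma th /\ supp th c] [set th | Gamma th /\ supp th 0]
          (translate c).
Proof.
split.
- move=> th [Gth th_c]; split; first exact: Gamma_translate.
  by apply/supp_translate; rewrite add0r.
- by move=> th th' _ _; exact: (can_inj (translateK c)).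
- move=> th [Gth th_0]; exists (translate (- c) th); last by rewrite -{1}(opprK c) translateK.
  by split; [exact: Gamma_translate | apply/supp_translate; rewrite subrr].
Qed.

End cycles.

Section mean_matrix.
Context {R : realType} {d : nat}.
Variables (V : site d -> \bar R) (alpha : R).
Local Open Scope ereal_scope.
Implicit Types (g eta th : site d -> site d).

Lemma clen_ge0 th : 0 <= clen th :> \bar R.
Proof. exact: esum_ge0. Qed.

Lemma clen_ge1 th : Gamma th -> 1 <= clen th :> \bar R.
Proof.
move=> [s [s_ge2 s_uniq th_next th_id]].
rewrite /clen (supp_cycle s_ge2 s_uniq th_next th_id).
by apply: (term_le_esum (fun=> 1%E) (i := s`_0)); exact: mem_nth (ltnW s_ge2).
Qed.

Lemma clen_fin_num {th} : Gamma th -> (clen th : \bar R) \is a fin_num.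
Proof.
move=> [s [s_ge2 s_uniq th_next th_id]].
have s_finite : finite_set [set` s] := finite_seq s.
rewrite /clen (supp_cycle s_ge2 s_uniq th_next th_id) esum_fset // fsbig_finite //=.
exact/sum_fin_numP.
Qed.

Lemma wt_ge0 th : 0 <= wt V alpha th.
Proof. exact: expeR_ge0. Qed.

Lemma mm_ge0 g th : 0 <= mm V alpha g th.
Proof. by rewrite mule_ge0 ?wt_ge0 // lee_fin indic_ge0. Qed.

Lemma mpowS_ge0 n g th : 0 <= mpowS V alpha n g th.
Proof.
elim: n th => [|n IHn] th /=; first exact: mm_ge0.
by apply: esum_ge0 => eta _; rewrite mule_ge0 ?mm_ge0.
Qed.

Lemma beta_ge0 : 0 <= beta V alpha.
Proof. by apply: esum_ge0 => th _; rewrite mule_ge0 ?clen_ge0 ?wt_ge0. Qed.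

Lemma clen_translate c th : clen (translate c th) = clen th :> \bar R.
Proof. by rewrite /clen (reindex_esum _ _ _ _ (translate_supp_bij c th)). Qed.

Lemma wt_translate c th : wt V alpha (translate c th) = wt V alpha th.
Proof.
rewrite /wt (reindex_esum _ _ _ _ (translate_supp_bij c th)); congr (expeR (- (_ * _))).
by apply: eq_esum => x _; rewrite /translate subrK opprB addrA subrK.
Qed.

Lemma beta_through x :
  \esum_(th in [set th | Gamma th /\ supp th x]) (clen th * wt V alpha th) = beta V alpha.
Proof.
rewrite /beta (reindex_esum _ _ _ _ (translate_through_bij x)).
by apply: eq_esum => th _; rewrite clen_translate wt_translate.
Qed.

Lemma esum_mm_clen_le eta :
  \esum_(th in @Gamma d) (mm V alpha eta th * clen th) <= clen eta * beta V alpha.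
Proof.
pose through x th : \bar R := if th \in [set th' | supp th' x] then 1 else 0.
have through_ge0 x th : 0 <= through x th by rewrite /through; case: ifP.
have incompat_le th :
    (\1_[set th' | incompat eta th'] th)%:E <= \esum_(x in supp eta) through x th.
  rewrite indicE; case: (boolP (th \in _)) => [|_]; last exact: esum_ge0.
  rewrite inE => -[x [eta_x th_x]]; apply: le_trans (term_le_esum _ eta_x).
  by rewrite /through ifT // inE.
apply: (@le_trans _ _ (\esum_(th in @Gamma d) \esum_(x in supp eta)
    (through x th * (clen th * wt V alpha th)))).
  apply: le_esum => th _; rewrite -ge0_mule_esuml ?mule_ge0 ?clen_ge0 ?wt_ge0 //.
  rewrite /mm -muleA muleC -muleA.
  by apply: lee_wpmul2r; [rewrite mule_ge0 ?clen_ge0 ?wt_ge0 | exact: incompat_le].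
rewrite exchange_esum; last by move=> th x; rewrite mule_ge0 ?mule_ge0 ?clen_ge0 ?wt_ge0.
rewrite /clen ge0_mule_esuml ?beta_ge0 //; apply: le_esum => x _.
rewrite mul1e -(beta_through x) esum_mkcondr.
by apply: le_esum => th _; rewrite /through; case: ifP; rewrite ?mul1e ?mul0e.
Qed.

Lemma esum_mpowS_clen_le n g :
  \esum_(th in @Gamma d) (mpowS V alpha n g th * clen th)
    <= clen g * beta V alpha ^+ n.+1.
Proof.
elim: n => [|n IHn]; first by rewrite expeS expe0 mule1; exact: esum_mm_clen_le.
rewrite [leLHS](_ : _ = \esum_(eta in @Gamma d) (mpowS V alpha n g eta *
    \esum_(th in @Gamma d) (mm V alpha eta th * clen th))); last first.
  have mpowS_mm_ge0 th eta : 0 <= mpowS V alpha n g eta * (mm V alpha eta th * clen th).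
    by rewrite mule_ge0 ?mpowS_ge0 // mule_ge0 ?mm_ge0 ?clen_ge0.
  transitivity (\esum_(th in @Gamma d) \esum_(eta in @Gamma d)
      (mpowS V alpha n g eta * (mm V alpha eta th * clen th))).
    apply: eq_esum => th _ /=; rewrite ge0_mule_esuml ?clen_ge0 //.
      by apply: eq_esum => eta _; rewrite -muleA.
    by move=> eta; rewrite mule_ge0 ?mpowS_ge0 ?mm_ge0.
  rewrite exchange_esum //; apply: eq_esum => eta _.
  by rewrite ge0_mule_esumr ?mpowS_ge0 // => th; rewrite mule_ge0 ?mm_ge0 ?clen_ge0.
apply: (@le_trans _ _ (\esum_(eta in @Gamma d) (mpowS V alpha n g eta * clen eta * beta V alpha))).
  apply: le_esum => eta _; rewrite -muleA.
  by apply: lee_wpmul2l; [exact: mpowS_ge0 | exact: esum_mm_clen_le].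
rewrite -ge0_mule_esuml ?beta_ge0 //; last by move=> eta; rewrite mule_ge0 ?mpowS_ge0 ?clen_ge0.
by rewrite expeS [beta _ _ * _]muleC muleA lee_wpmul2r ?beta_ge0.
Qed.

Lemma esum_mpow_le n g : (0 < n)%N ->
  \esum_(th in @Gamma d) mpow V alpha n g th <= clen g * beta V alpha ^+ n.
Proof.
case: n => // n _; apply: le_trans (esum_mpowS_clen_le n g).
by apply: le_esum => th Gth; rewrite lee_pemulr ?mpowS_ge0 ?clen_ge1.
Qed.

End mean_matrix.

Section geometric.
Context {R : realType}.

Lemma geometric_partial_le (b : R) k : 0 <= b < 1 ->
  \sum_(1 <= i < k) b ^+ i <= (1 - b)^-1.
Proof.
case/andP=> b_ge0 b_lt1; have inv_ge0 : 0 <= (1 - b)^-1 by rewrite invr_ge0 subr_ge0 ltW.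
case: k => [|k]; first by rewrite big_geq.
apply: (@le_trans _ _ (\sum_(0 <= i < k.+1) b ^+ i)).
  by rewrite [leRHS](big_ltn (ltn0Sn k)) lerDr.
rewrite exprn_geometric -[leLHS]/(series (geometric 1 b) k.+1).
rewrite geometric_seriesE ?lt_eqF //= mul1r ler_pdivrMr ?subr_gt0 //.
by rewrite mulVf ?subr_eq0 ?gt_eqF // gerBl exprn_ge0.
Qed.

Lemma geometric_eseries_lty (b : R) : 0 <= b < 1 ->
  (\sum_(1 <= n <oo) b%:E ^+ n < +oo)%E.
Proof.
move=> b01; apply: (@le_lt_trans _ _ (1 - b)^-1%:E); last exact: ltry.
apply: lime_le.
  by apply: is_cvg_nneseries => n _; rewrite expe_ge0 // lee_fin; case/andP: b01.
apply: nearW => k /=; under eq_bigr do rewrite -EFin_expe.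
by rewrite sumEFin lee_fin geometric_partial_le.
Qed.

End geometric.

Theorem lemma3p6 (R : realType) (d : nat) (alpha : R) (V : site d -> \bar R)
  (halpha : 0 < alpha) (hV0 : V 0 = 0%E) (hVnn : forall x, (0 <= V x)%E)
  (hVconv : strictly_convex_pot V)
  (g : site d -> site d) (hg : @Gamma d g) :
  ((\sum_(1 <= n <oo) \esum_(th in @Gamma d) mpow V alpha n g th)
     <= \sum_(1 <= n <oo) (clen g * beta V alpha ^+ n))%E
  /\ ((beta V alpha < 1)%E ->
      (\sum_(1 <= n <oo) \esum_(th in @Gamma d) mpow V alpha n g th < +oo)%E).
Proof.
have series_le : (\sum_(1 <= n <oo) \esum_(th in @Gamma d) mpow V alpha n g th
    <= \sum_(1 <= n <oo) (clen g * beta V alpha ^+ n))%E.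
  rewrite eseries_cond [leRHS]eseries_cond; apply: lee_nneseries => [n _ _|n /andP[_ n_gt0]].
    by apply: esum_ge0 => th _; exact: mpowS_ge0.
  exact: esum_mpow_le.
split => // beta_lt1; apply: le_lt_trans series_le _.
have beta_fin : beta V alpha \is a fin_num.
  by rewrite ge0_fin_numE ?beta_ge0 // (lt_trans beta_lt1) ?ltry.
rewrite -(fineK (clen_fin_num hg)) -(fineK beta_fin) nneseriesZl; last first.
  by move=> n _; rewrite expe_ge0 // lee_fin fine_ge0 ?beta_ge0.
apply: lte_mul_pinfty; rewrite ?lee_fin ?fine_ge0 ?clen_ge0 //.
by apply: geometric_eseries_lty; rewrite fine_ge0 ?beta_ge0 //= -lte_fin fineK.
Qed.
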